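(* Let $G$ be a triangle-free simple undirected graph on vertex set $[n]$. If $X\in\operatorname{R}_1[\mathcal{M}_n^+(G)]$, then $M(X)\ge 0$.
   Context: $\mathcal{M}_n^+(G)$ is the cone of $n\times n$ complex PSD matrices $X$ with $X_{ij}=0$ whenever $i\neq j$ and $\{i,j\}$ is not an edge of $G$. For a cone $\mathcal{C}\subseteq\mathcal{M}_n^+$, $\operatorname{R}_1[\mathcal{C}]$ is the convex cone generated by the rank-1 matrices in $\mathcal{C}$. The comparison matrix $M(X)$ is defined by $M(X)_{ii}=|X_{ii}|$ and $M(X)_{ij}=-|X_{ij}|$ for $i\ne j$. *)

From HB Require Import structures.
From mathcomp Require Import all_boot all_order all_algebra.
From mathcomp Require Import reals complex.
Set Implicit Arguments. Unset Strict Implicit. Unset Printing Implicit Defensive.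
Import Order.TTheory GRing.Theory Num.Theory.
Local Open Scope ring_scope.

Definition adjmx (C : numClosedFieldType) (m p : nat) (A : 'M[C]_(m, p)) : 'M[C]_(p, m) :=
  (map_mx (fun z : C => z^*) A)^T.

Definition psd (C : numClosedFieldType) (n : nat) (A : 'M[C]_n) : Prop :=
  adjmx A = A /\ forall v : 'cV[C]_n, 0 <= (adjmx v *m A *m v) 0 0.

Definition simple_graph (n : nat) (e : rel 'I_n) : Prop :=
  (forall i j, e i j = e j i) /\ (forall i, ~~ e i i).

Definition triangle_free (n : nat) (e : rel 'I_n) : Prop :=
  forall i j k, ~ [&& e i j, e j k & e i k].

Definition psd_graph_cone (C : numClosedFieldType) (n : nat) (e : rel 'I_n)
  (X : 'M[C]_n) : Prop :=
  psd X /\ (forall i j, i != j -> ~~ e i j -> X i j = 0).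

Definition rank1_cone (C : numClosedFieldType) (n : nat) (K : 'M[C]_n -> Prop)
  (X : 'M[C]_n) : Prop :=
  exists (k : nat) (c : 'I_k -> C) (Y : 'I_k -> 'M[C]_n),
    (forall l, 0 <= c l) /\ (forall l, K (Y l) /\ \rank (Y l) = 1%N) /\
    X = \sum_(l < k) c l *: Y l.

Definition comparison_mx (C : numClosedFieldType) (n : nat) (X : 'M[C]_n) : 'M[C]_n :=
  \matrix_(i, j) if i == j then `|X i i| else - `|X i j|.

From HB Require Import structures.
From mathcomp Require Import all_boot all_order all_algebra.
From mathcomp Require Import reals complex ring.
Set Implicit Arguments. Unset Strict Implicit. Unset Printing Implicit Defensive.
Import Order.TTheory GRing.Theory Num.Theory.
Local Open Scope ring_scope.

(* If a rank-one psd matrix Y = u u^* lies in M_n^+(G), the support of u is a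
   clique of G; for triangle-free G every row of Y thus has at most one nonzero
   off-diagonal entry, and AM-GM with |Y_ij|^2 = Y_ii Y_jj gives w^T M(Y) w >= 0
   for every w >= 0.  For X = sum_l c_l Y_l, M(X) has nonpositive off-diagonal
   entries, so its Hermitian form is smallest on nonnegative vectors, where
   M(X) dominates sum_l c_l M(Y_l) entrywise by the triangle inequality. *)

Section HermitianForm.
Variables (C : numClosedFieldType) (n : nat).
Implicit Types (A B : 'M[C]_n) (v w : 'cV[C]_n).

Lemma adjmxE m p (A : 'M[C]_(m, p)) i j : adjmx A i j = (A j i)^*.
Proof. by rewrite !mxE. Qed.

Lemma adjmxK m p (A : 'M[C]_(m, p)) : adjmx (adjmx A) = A.
Proof. by apply/matrixP => i j; rewrite !adjmxE conjCK. Qed.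

Lemma adjmxM m p q (A : 'M[C]_(m, p)) (B : 'M[C]_(p, q)) :
  adjmx (A *m B) = adjmx B *m adjmx A.
Proof. by rewrite /adjmx map_mxM trmx_mul. Qed.

Definition hform A v : C := (adjmx v *m A *m v) 0 0.

Lemma hformE A v : hform A v = \sum_i \sum_j (v i 0)^* * A i j * v j 0.
Proof.
rewrite /hform mxE; under eq_bigr => j _ do rewrite mxE big_distrl.
by rewrite exchange_big; apply: eq_bigr => i _; apply: eq_bigr => j _; rewrite !mxE.
Qed.

Lemma hform_real A v : adjmx A = A -> hform A v \is Num.real.
Proof.
move=> hermA; apply/CrealP; rewrite /hform -adjmxE.
by rewrite !adjmxM adjmxK hermA mulmxA.
Qed.

Lemma hform_sum k (c : 'I_k -> C) (A : 'I_k -> 'M[C]_n) v :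
  hform (\sum_l c l *: A l) v = \sum_l c l * hform (A l) v.
Proof.
rewrite /hform mulmx_sumr mulmx_suml summxE; apply: eq_bigr => l _.
by rewrite -scalemxAr -scalemxAl mxE.
Qed.

Lemma hform_le A B w : (forall i j, A i j <= B i j) -> (forall i, 0 <= w i 0) ->
  hform A w <= hform B w.
Proof.
move=> leAB w_ge0; rewrite !hformE; apply: ler_sum => i _; apply: ler_sum => j _.
by rewrite geC0_conj // ler_wpM2r // ler_wpM2l.
Qed.

Lemma psd_herm A i j : psd A -> A j i = (A i j)^*.
Proof. by case=> /matrixP/(_ j i) <- _; rewrite adjmxE. Qed.

Lemma psd_diag_ge0 A i : psd A -> 0 <= A i i.
Proof.
have adj_delta : adjmx (delta_mx i 0 : 'cV[C]_n) = delta_mx 0 i.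
  by apply/matrixP => a b; rewrite !mxE rmorph_nat andbC.
by case=> _ /(_ (delta_mx i 0)); rewrite adj_delta -rowE -colE !mxE.
Qed.

Lemma psd_sum k (c : 'I_k -> C) (A : 'I_k -> 'M[C]_n) :
  (forall l, 0 <= c l) -> (forall l, psd (A l)) -> psd (\sum_l c l *: A l).
Proof.
move=> c_ge0 psdA; split=> [|v].
  apply/matrixP => i j; rewrite adjmxE !summxE rmorph_sum; apply: eq_bigr => l _.
  by rewrite !mxE (psd_herm i j (psdA l)) rmorphM /= conjCK geC0_conj.
rewrite -[X in 0 <= X]/(hform _ v) hform_sum; apply: sumr_ge0 => l _.
by rewrite mulr_ge0 //; case: (psdA l) => _ /(_ v).
Qed.

(* Termwise, Re (v_i^* A_ij v_j) >= |v_i| A_ij |v_j| as A_ij <= 0 off the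
   diagonal, and the form of a Hermitian matrix is its own real part. *)
Lemma Zmx_hform_norm A v : adjmx A = A -> (forall i j, i != j -> A i j <= 0) ->
  hform A (map_mx Num.norm v) <= hform A v.
Proof.
move=> hermA offA.
have realA i j : A i j \is Num.real.
  have [<-|ij] := eqVneq i j; last exact: ler0_real (offA i j ij).
  by apply/CrealP; rewrite -adjmxE hermA.
rewrite -(Creal_ReP _ (hform_real v hermA)) !hformE raddf_sum /=; apply: ler_sum => i _.
rewrite raddf_sum /=; apply: ler_sum => j _.
have -> : (v i 0)^* * A i j * v j 0 = A i j * ((v i 0)^* * v j 0) by rewrite mulrCA mulrA.
have -> : (map_mx Num.norm v i 0)^* * A i j * map_mx Num.norm v j 0
    = A i j * `|(v i 0)^* * v j 0|.
  by rewrite !mxE normrM norm_conjC geC0_conj // mulrCA mulrA.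
rewrite ReMl //; have [<-|ij] := eqVneq i j.
  have v2_ge0 : 0 <= (v i 0)^* * v i 0 by rewrite -normCKC exprn_ge0.
  by rewrite ger0_norm // (Creal_ReP _ (ger0_real v2_ge0)).
by rewrite ler_wnM2l ?offA ?(leif_Re_Creal _).1.
Qed.

Lemma Zmx_psd A : adjmx A = A -> (forall i j, i != j -> A i j <= 0) ->
  (forall w, (forall i, 0 <= w i 0) -> 0 <= hform A w) -> psd A.
Proof.
move=> hermA offA form_ge0; split=> // v; apply: le_trans (Zmx_hform_norm v hermA offA).
by apply: form_ge0 => i; rewrite mxE normr_ge0.
Qed.

End HermitianForm.

Section ComparisonMatrix.
Variables (C : numClosedFieldType) (n : nat).
Implicit Types (A : 'M[C]_n) (w : 'cV[C]_n).

Lemma comparison_mx_herm A : adjmx A = A -> adjmx (comparison_mx A) = comparison_mx A.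
Proof.
move=> /matrixP hermA; apply/matrixP => i j; rewrite !mxE eq_sym.
have [->|ij] := eqVneq j i; first by rewrite conj_normC.
by rewrite -[A j i]hermA adjmxE norm_conjC rmorphN /= conj_normC.
Qed.

Lemma comparison_mx_offdiag_le0 A i j : i != j -> comparison_mx A i j <= 0.
Proof. by move=> ij; rewrite mxE (negbTE ij) oppr_le0. Qed.

Lemma comparison_mx_sum_le k (c : 'I_k -> C) (A : 'I_k -> 'M[C]_n) i j :
  (forall l, 0 <= c l) -> (forall l, 0 <= A l i i) ->
  (\sum_l c l *: comparison_mx (A l)) i j <= comparison_mx (\sum_l c l *: A l) i j.
Proof.
move=> c_ge0 diag_ge0; rewrite summxE mxE summxE.
under eq_bigr => l _ do rewrite !mxE.
have [_|_] := eqVneq i j.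
  rewrite ger0_norm; last by apply: sumr_ge0 => l _; rewrite mxE mulr_ge0.
  by apply: ler_sum => l _; rewrite mxE ger0_norm.
under eq_bigr => l _ do rewrite mulrN.
rewrite sumrN lerN2 summxE; apply: le_trans (ler_norm_sum _ _ _) _.
by apply: ler_sum => l _; rewrite mxE normrM ger0_norm.
Qed.

Lemma hform_comparison_mx A w :
  (forall i, 0 <= w i 0) ->
  hform (comparison_mx A) w =
    \sum_i `|A i i| * w i 0 ^+ 2 - \sum_i \sum_(j | j != i) `|A i j| * w i 0 * w j 0.
Proof.
move=> w_ge0; rewrite hformE -sumrB; apply: eq_bigr => i _.
rewrite (bigD1 i) //= !mxE eqxx geC0_conj // -sumrN; congr (_ + _); first by ring.
by apply: eq_bigr => j /negbTE ji; rewrite !mxE eq_sym ji; ring.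
Qed.

End ComparisonMatrix.

Lemma rank1_mx_minor (F : fieldType) m p (A : 'M[F]_(m, p)) i j k l :
  \rank A = 1%N -> A i k * A j l = A i l * A j k.
Proof.
move=> rankA1; have := mulmx_base A; move: (col_base A) (row_base A).
by rewrite rankA1 => L U <-; rewrite !mxE !big_ord1; ring.
Qed.

Section PsdRankOne.
Variables (C : numClosedFieldType) (n : nat) (Y : 'M[C]_n).
Hypotheses (psdY : psd Y) (rankY1 : \rank Y = 1%N).

Lemma psd_rank1_normK i j : `|Y i j| ^+ 2 = Y i i * Y j j.
Proof. by rewrite normCK -(psd_herm i j psdY) rank1_mx_minor. Qed.

Lemma psd_rank1_support_trans i j k : Y i j != 0 -> Y i k != 0 -> Y j k != 0.
Proof.
have nzE a b : (Y a b != 0) = (Y a a * Y b b != 0).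
  by rewrite -psd_rank1_normK sqrf_eq0 normr_eq0.
by rewrite !nzE !mulf_eq0 !negb_or => /andP[_ ->] /andP[_ ->].
Qed.

Lemma psd_rank1_AMGM i j (a b : C) : 0 <= a -> 0 <= b ->
  `|Y i j| * a * b *+ 2 <= Y i i * a ^+ 2 + Y j j * b ^+ 2.
Proof.
move=> a_ge0 b_ge0.
have pi_ge0 : 0 <= Y i i * a ^+ 2 by rewrite mulr_ge0 ?exprn_ge0 ?psd_diag_ge0.
have pj_ge0 : 0 <= Y j j * b ^+ 2 by rewrite mulr_ge0 ?exprn_ge0 ?psd_diag_ge0.
have lhs_ge0 : 0 <= `|Y i j| * a * b by rewrite !mulr_ge0.
rewrite -(@ler_pXn2r _ 2) ?nnegrE ?addr_ge0 //.
have -> : (`|Y i j| * a * b *+ 2) ^+ 2 = `|Y i j| ^+ 2 * a ^+ 2 * b ^+ 2 *+ 4.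
  by ring.
rewrite psd_rank1_normK -mulrA mulrACA.
exact: (real_leif_AGM2_scaled (ger0_real pi_ge0) (ger0_real pj_ge0)).1.
Qed.

End PsdRankOne.

Definition offdiag_support (C : numClosedFieldType) n (A : 'M[C]_n) (i : 'I_n) :=
  [pred j | (j != i) && (A i j != 0)].

Section TriangleFree.
Variables (C : numClosedFieldType) (n : nat) (e : rel 'I_n) (Y : 'M[C]_n).
Hypotheses (tf : triangle_free e) (coneY : psd_graph_cone e Y).
Hypothesis rankY1 : \rank Y = 1%N.

Let psdY : psd Y := coneY.1.

Lemma support_edge i j : i != j -> Y i j != 0 -> e i j.
Proof. by move=> ij; apply: contraR => /(coneY.2 i j ij) ->. Qed.

Lemma card_offdiag_support_le1 i : (#|offdiag_support Y i| <= 1)%N.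
Proof.
apply/card_le1_eqP => j k /andP[ji Yij] /andP[ki Yik]; apply/eqP.
have Yjk := psd_rank1_support_trans psdY rankY1 Yij Yik.
apply: contraT => kj; have [] := @tf i j k.
by apply/and3P; split; apply: support_edge; rewrite // eq_sym.
Qed.

(* Summing AM-GM over the ordered pairs of the support counts each
   Y_ii w_i^2 at most twice, as each row meets the support at most once. *)
Lemma offdiag_sum_le (w : 'I_n -> C) : (forall i, 0 <= w i) ->
  \sum_i \sum_(j | j != i) `|Y i j| * w i * w j <= \sum_i Y i i * w i ^+ 2.
Proof.
move=> w_ge0; pose p i := Y i i * w i ^+ 2.
have p_ge0 i : 0 <= p i by rewrite mulr_ge0 ?exprn_ge0 ?psd_diag_ge0.
have support_sum i : \sum_(j | j != i) `|Y i j| * w i * w j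
                      = \sum_(j in offdiag_support Y i) `|Y i j| * w i * w j.
  rewrite big_mkcondr /=; apply: eq_bigr => j _.
  by case: eqP => [->|]; rewrite ?normr0 ?mul0r.
have support_sym i j : (j \in offdiag_support Y i) = (i \in offdiag_support Y j).
  by rewrite !inE eq_sym (psd_herm i j psdY) conjC_eq0.
have row_le i : \sum_(j in offdiag_support Y i) p i <= p i.
  rewrite sumr_const; have := card_offdiag_support_le1 i.
  by case: #|_| => [|[|]] //= _; rewrite ?mulr0n.
rewrite -(ler_pMn2r (n := 2)) // -sumrMnl.
under eq_bigr => i _ do rewrite support_sum -sumrMnl.
apply: le_trans (_ : \sum_i \sum_(j in offdiag_support Y i) (p i + p j) <= _).
  by apply: ler_sum => i _; apply: ler_sum => j _; apply: psd_rank1_AMGM.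
under eq_bigr => i _ do rewrite big_split /=.
rewrite big_split /= mulr2n; apply: lerD; first by apply: ler_sum => i _; apply: row_le.
rewrite (exchange_big_dep xpredT) //=; apply: ler_sum => j _.
by under eq_bigl => i do rewrite -support_sym; apply: row_le.
Qed.

Lemma psd_comparison_mx_rank1 : psd (comparison_mx Y).
Proof.
apply: Zmx_psd => [|i j|w w_ge0]; first exact: comparison_mx_herm psdY.1.
  exact: comparison_mx_offdiag_le0.
rewrite hform_comparison_mx // subr_ge0.
under [X in _ <= X]eq_bigr => i _ do rewrite ger0_norm ?psd_diag_ge0 //.
exact: offdiag_sum_le (fun i => w i 0) w_ge0.
Qed.

End TriangleFree.

Theorem mainTheorem7 (R : realType) (n : nat) (e : rel 'I_n)
  (X : 'M[R[i]]_n) :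
  simple_graph e -> triangle_free e ->
  rank1_cone (psd_graph_cone e) X ->
  psd (comparison_mx X).
Proof.
(* The support of a Hermitian matrix is symmetric. *)
move=> _ tf [k [c [Y [c_ge0 [coneY ->]]]]].
have psdY l : psd (Y l) := (coneY l).1.1.
have psdX := psd_sum c_ge0 psdY.
apply: Zmx_psd => [|i j|w w_ge0]; first exact: comparison_mx_herm psdX.1.
  exact: comparison_mx_offdiag_le0.
have Mle i j := @comparison_mx_sum_le _ _ _ c Y i j c_ge0
  (fun l => psd_diag_ge0 i (psdY l)).
apply: le_trans (hform_le Mle w_ge0); rewrite hform_sum.
apply: sumr_ge0 => l _; rewrite mulr_ge0 //.
by case: (psd_comparison_mx_rank1 tf (coneY l).1 (coneY l).2) => _ /(_ w).
Qed.
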